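(* Let $n>3$ and let $a<b<c$ be elements of $\mathcal{C}_n$. Then the triangle $\triangle^{(n)}\{a,b,c\}$ contains two distinct elements $\alpha,\beta$ which are left-similar (i.e. $\gamma\cdot\alpha=\gamma\cdot\beta$ for every $\gamma\in\triangle^{(n)}\{a,b,c\}$) and neither of which is a right identity of $\triangle^{(n)}\{a,b,c\}$.
   Context: $\mathcal{C}_n=\{0,1,\dots,n-1\}$ with its usual order; $\widehat{\mathcal{E}}_{\mathcal{C}_n}$ is the set of all order-preserving maps $\mathcal{C}_n\to\mathcal{C}_n$ (not required to fix $0$), a semiring with $(\alpha+\beta)(x)=\max(\alpha(x),\beta(x))$ and $(\alpha\cdot\beta)(x)=\beta(\alpha(x))$. The triangle $\triangle^{(n)}\{a,b,c\}$ is the subsemiring of all $\alpha\in\widehat{\mathcal{E}}_{\mathcal{C}_n}$ with image contained in $\{a,b,c\}$. A right identity is $e$ with $\alpha\cdot e=\alpha$ for all $\alpha$ in the triangle. *)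

(* C_n = 'I_n with its usual order. *)
From mathcomp Require Import all_boot.
Set Implicit Arguments. Unset Strict Implicit. Unset Printing Implicit Defensive.

Definition map_n (n : nat) := {ffun 'I_n -> 'I_n}.

Definition order_preserving n (f : map_n n) : Prop :=
  forall x y : 'I_n, x <= y -> f x <= f y.

(* semiring product: (alpha . beta)(x) = beta(alpha(x)) *)
Definition smul n (alpha beta : map_n n) : map_n n :=
  [ffun x => beta (alpha x)].

Definition in_triangle n (a b c : 'I_n) (f : map_n n) : Prop :=
  order_preserving f /\ forall x, f x \in [:: a; b; c].

Definition left_similar n (a b c : 'I_n) (alpha beta : map_n n) : Prop :=
  forall gamma, in_triangle a b c gamma -> smul gamma alpha = smul gamma beta.

Definition right_identity n (a b c : 'I_n) (e : map_n n) : Prop :=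
  forall alpha, in_triangle a b c alpha -> smul alpha e = alpha.

From mathcomp Require Import all_boot.

Set Implicit Arguments.
Unset Strict Implicit.
Unset Printing Implicit Defensive.

(* Since n > 3 some point d of C_n lies outside {a, b, c}. The step maps
   sending [0, d) and [0, d] to a and everything above to c differ only at d,
   which no element of the triangle takes as a value, so they are left-similar.
   Neither is a right identity: after the constant map b they give a or c. *)

Section Triangle.

Variables (n : nat) (a b c : 'I_n).

Lemma exists_notin_triangle : 3 < n -> exists d : 'I_n, d \notin [:: a; b; c].
Proof.
move=> n_gt3; apply/existsP; apply: contraTT n_gt3 => /existsPn all_in.
have /subset_leq_card : [set: 'I_n] \subset [:: a; b; c].
  by apply/subsetP => x _; apply/negPn/all_in.
by rewrite cardsT card_ord => /leq_trans/(_ (card_size _)); rewrite -leqNgt.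
Qed.

Definition const_map (v : 'I_n) : map_n n := [ffun _ => v].

Lemma const_map_in_triangle v : v \in [:: a; b; c] -> in_triangle a b c (const_map v).
Proof. by move=> v_in; split=> [x y _|x]; rewrite !ffunE. Qed.

Lemma not_right_identity (f : map_n n) : f b != b -> ~ right_identity a b c f.
Proof.
have b_in : b \in [:: a; b; c] by rewrite !inE eqxx orbT.
move=> fb_neq /(_ _ (const_map_in_triangle b_in)) /(congr1 (fun g : map_n n => g b)).
by rewrite !ffunE; apply/eqP.
Qed.

Definition step_map (t : nat) (lo hi : 'I_n) : map_n n :=
  [ffun x : 'I_n => if x < t then lo else hi].

Lemma step_map_order_preserving t (lo hi : 'I_n) :
  lo <= hi -> order_preserving (step_map t lo hi).
Proof.
move=> lo_le_hi x y x_le_y; rewrite !ffunE.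
case: ifP => [_|/negbT]; case: ifP => // y_lt /negP[].
exact: leq_ltn_trans x_le_y y_lt.
Qed.

Lemma step_map_in_triangle t : a <= c -> in_triangle a b c (step_map t a c).
Proof.
move=> a_le_c; split; first exact: step_map_order_preserving.
by move=> x; rewrite ffunE; case: ifP; rewrite !inE eqxx ?orbT.
Qed.

Lemma step_map_succ_neq (d lo hi : 'I_n) :
  lo != hi -> step_map d lo hi != step_map d.+1 lo hi.
Proof.
move=> lo_neq; apply/eqP => /(congr1 (fun g : map_n n => g d)).
by rewrite !ffunE ltnn ltnSn; apply/eqP; rewrite eq_sym.
Qed.

Lemma step_map_succ_off (d x lo hi : 'I_n) :
  x != d -> step_map d lo hi x = step_map d.+1 lo hi x.
Proof.
move=> x_neq; rewrite !ffunE [x < d.+1]ltnS [x <= d]leq_eqVlt.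
by case: eqP => // /ord_inj x_eq; rewrite x_eq eqxx in x_neq.
Qed.

Lemma step_map_left_similar (d lo hi : 'I_n) :
  d \notin [:: a; b; c] -> left_similar a b c (step_map d lo hi) (step_map d.+1 lo hi).
Proof.
move=> d_out g [_ g_in]; apply/ffunP => x.
rewrite [LHS]ffunE [RHS]ffunE step_map_succ_off //.
by apply: contraNneq d_out => <-.
Qed.

End Triangle.

Theorem proposition31 (n : nat) (hn : 3 < n) (a b c : 'I_n)
  (hab : a < b) (hbc : b < c) :
  exists alpha beta : map_n n,
    in_triangle a b c alpha /\ in_triangle a b c beta /\ alpha <> beta /\
    left_similar a b c alpha beta /\
    ~ right_identity a b c alpha /\ ~ right_identity a b c beta.
Proof.
have a_lt_c := ltn_trans hab hbc.
have [d d_out] := exists_notin_triangle a b c hn.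
have a_neq_c : a != c by apply: contraTneq a_lt_c => ->; rewrite ltnn.
have step_b_neq t : step_map t a c b != b.
  rewrite ffunE; case: ifP => _.
  - by apply: contraTneq hab => ->; rewrite ltnn.
  - by apply: contraTneq hbc => ->; rewrite ltnn.
exists (step_map d a c), (step_map d.+1 a c).
split; first exact: step_map_in_triangle (ltnW a_lt_c).
split; first exact: step_map_in_triangle (ltnW a_lt_c).
split; first exact/eqP/step_map_succ_neq.
split; first exact: step_map_left_similar.
by split; apply: not_right_identity.
Qed.
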